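(* Let $C, C' \in M_n(\mathbb{C})$ be contractions. Then $\mathcal{A}(C)$ is unitarily similar to $\mathcal{A}(C')$ if and only if $C$ and $C'$ are unitarily similar.
   Context: A contraction is a matrix $C$ with operator norm $\|C\|\le 1$. For a contraction $C\in M_n(\mathbb{C})$ put $D_C := I-C^*C\ge 0$ and $d:=\operatorname{rank} D_C$. Let $B_C$ denote the $d\times n$ matrix (with respect to some orthonormal basis of $\operatorname{Im} D_C$) of the map $\mathbb{C}^n\to\operatorname{Im} D_C$ that acts on $\operatorname{Im} D_C$ as $D_C^{1/2}$ and sends $(\operatorname{Im} D_C)^\perp$ to $0$; thus $B_C^*B_C=D_C$ and $B_C$ has full row rank $d$. The associated partial isometry of $C$ is the $(d+n)\times(d+n)$ matrix $\mathcal{A}(C):=\begin{bmatrix}0&B_C\\0&C\end{bmatrix}$ (its unitary similarity class does not depend on the choice of orthonormal basis of $\operatorname{Im}D_C$). *)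

From HB Require Import structures.
From mathcomp Require Import all_boot all_order all_algebra.
From mathcomp Require Import complex.
From mathcomp Require Import reals.
Set Implicit Arguments. Unset Strict Implicit. Unset Printing Implicit Defensive.
Import Order.TTheory GRing.Theory Num.Theory.
Local Open Scope ring_scope.

Definition adjmx (F : numClosedFieldType) (m p : nat) (A : 'M[F]_(m, p)) : 'M[F]_(p, m) :=
  (map_mx Num.conj A)^T.

(* Contraction: operator norm <= 1, i.e. ||C v||^2 <= ||v||^2 for every vector v. *)
Definition contraction (F : numClosedFieldType) (n : nat) (C : 'M[F]_n) : Prop :=
  forall v : 'cV[F]_n,
    (adjmx (C *m v) *m (C *m v)) 0 0 <= (adjmx v *m v) 0 0.

Definition psd (F : numClosedFieldType) (n : nat) (S : 'M[F]_n) : Prop :=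
  adjmx S = S /\ forall v : 'cV[F]_n, 0 <= (adjmx v *m S *m v) 0 0.

Definition defect (F : numClosedFieldType) (n : nat) (C : 'M[F]_n) : 'M[F]_n :=
  1%:M - adjmx C *m C.

(* B is "B_C": the d x n matrix (d = rank D_C), with respect to some orthonormal
   basis (columns of V) of Im D_C, of the map acting as D_C^{1/2} (the PSD square
   root S of D_C).  Since S vanishes on (Im D_C)^perp and maps into Im D_C, that
   matrix is V^* S. *)
Definition is_BC (F : numClosedFieldType) (n : nat) (C : 'M[F]_n)
    (B : 'M[F]_(\rank (defect C), n)) : Prop :=
  exists (V : 'M[F]_(n, \rank (defect C))) (S : 'M[F]_n),
    [/\ adjmx V *m V = 1%:M,
        (V^T == (defect C)^T)%MS,         (* columns of V span Im D_C *)
        psd S, S *m S = defect C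
      & B = adjmx V *m S].

Definition assoc_pi (F : numClosedFieldType) (n : nat) (C : 'M[F]_n)
    (B : 'M[F]_(\rank (defect C), n)) : 'M[F]_(\rank (defect C) + n) :=
  block_mx 0 B 0 C.

(* Unitary similarity between square matrices of possibly different (a priori) sizes:
   there is U with U U^* = I and U^* U = I (forcing p = q) and U^* M U = M'. *)
Definition unit_sim (F : numClosedFieldType) (p q : nat) (M : 'M[F]_p) (M' : 'M[F]_q) : Prop :=
  exists U : 'M[F]_(p, q),
    [/\ U *m adjmx U = 1%:M, adjmx U *m U = 1%:M & adjmx U *m M *m U = M'].

From HB Require Import structures.
From mathcomp Require Import all_boot all_order all_algebra.
From mathcomp Require Import complex.
From mathcomp Require Import reals.
Set Implicit Arguments.
Unset Strict Implicit.
Unset Printing Implicit Defensive.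
Import Order.TTheory GRing.Theory Num.Theory.
Local Open Scope ring_scope.

(* B_C is a full-row-rank matrix with B_C^* B_C = D_C, and these two facts
   determine B_C up to a unitary factor on the left: X^* X = Y^* Y forces
   Y = Q X with Q := Y X^* H^-1 unitary, where H = X X^*.  Hence a unitary
   similarity U between C and C' lifts to diag(Q^*, U) between A(C) and A(C').
   Conversely, a unitary [[a, b], [c, d]] intertwining A(C) and A(C') has
   B c = 0 and C c = 0, so c = (B^* B + C^* C) c = 0 and d is a unitary
   intertwining C and C'. *)

Section Adjoint.
Variable F : numClosedFieldType.

Lemma adjmxM m n p (A : 'M[F]_(m, n)) (B : 'M[F]_(n, p)) :
  adjmx (A *m B) = adjmx B *m adjmx A.
Proof. by rewrite /adjmx map_mxM trmx_mul. Qed.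

Lemma adjmxK m n (A : 'M[F]_(m, n)) : adjmx (adjmx A) = A.
Proof.
rewrite /adjmx map_trmx trmxK -map_mx_comp.
by apply/matrixP=> i j; rewrite !mxE /= conjCK.
Qed.

Lemma adjmx0 m n : adjmx (0 : 'M[F]_(m, n)) = 0.
Proof. by rewrite /adjmx map_mx0 trmx0. Qed.

Lemma adjmx_block m1 m2 n1 n2 (a : 'M[F]_(m1, n1)) (b : 'M[F]_(m1, n2))
   (c : 'M[F]_(m2, n1)) (d : 'M[F]_(m2, n2)) :
  adjmx (block_mx a b c d) = block_mx (adjmx a) (adjmx c) (adjmx b) (adjmx d).
Proof. by rewrite /adjmx map_block_mx tr_block_mx. Qed.

Lemma adjmx_inv n (A : 'M[F]_n) : adjmx (invmx A) = invmx (adjmx A).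
Proof. by rewrite /adjmx map_invmx trmx_inv. Qed.

Lemma adjmx_herm m n (A : 'M[F]_(m, n)) : adjmx (A *m adjmx A) = A *m adjmx A.
Proof. by rewrite adjmxM adjmxK. Qed.

(* The diagonal entries of A^* A are the squared norms of the columns of A. *)
Lemma mul_adjmx_eq0 m n (A : 'M[F]_(m, n)) : adjmx A *m A = 0 -> A = 0.
Proof.
move=> AA0; apply/matrixP=> i j; rewrite mxE.
have /matrixP /(_ j j) := AA0; rewrite !mxE => Ajj0.
have sum0 : \sum_k A k j * (A k j)^* = 0.
  by rewrite -[RHS]Ajj0; apply: eq_bigr => k _; rewrite !mxE mulrC.
have /eqP := @psumr_eq0P _ _ xpredT _ (fun k _ => mul_conjC_ge0 (A k j)) sum0 i isT.
by rewrite mul_conjC_eq0 => /eqP.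
Qed.

Lemma mxrank_adjmx m n (A : 'M[F]_(m, n)) : \rank (adjmx A) = \rank A.
Proof. by rewrite /adjmx mxrank_tr mxrank_map. Qed.

(* A^* A and A^* have the same row kernel. *)
Lemma mxrank_mul_adjmx m n (A : 'M[F]_(m, n)) : \rank (adjmx A *m A) = \rank A.
Proof.
have eq_ker : (kermx (adjmx A *m A) == kermx (adjmx A))%MS.
  apply/andP; split; apply/rV_subP => u /sub_kermxP uAA0; apply/sub_kermxP.
    rewrite -[u *m _]adjmxK (@mul_adjmx_eq0 _ _ (adjmx (u *m adjmx A))) ?adjmx0 //.
    by rewrite adjmxK adjmxM adjmxK mulmxA -(mulmxA u) uAA0 mul0mx.
  by rewrite mulmxA uAA0 mul0mx.
have := mxrank_ker (adjmx A *m A); rewrite (eqmxP eq_ker) mxrank_ker.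
by rewrite mxrank_adjmx => /eqP; rewrite eqn_sub2lE ?rank_leq_col // => /eqP.
Qed.

Lemma row_free_mul_adjmx_unit m n (A : 'M[F]_(m, n)) :
  row_free A -> A *m adjmx A \in unitmx.
Proof.
by rewrite -row_free_unit /row_free -{2}[A]adjmxK mxrank_mul_adjmx mxrank_adjmx.
Qed.

Lemma isometry_of_gram_eq m p n (X : 'M[F]_(m, n)) (Y : 'M[F]_(p, n)) :
  row_free X -> adjmx X *m X = adjmx Y *m Y ->
  exists Q : 'M[F]_(p, m), adjmx Q *m Q = 1%:M /\ Q *m X = Y.
Proof.
move=> freeX XX_YY; have unitH := row_free_mul_adjmx_unit freeX.
set H := X *m adjmx X in unitH.
have adjH : adjmx H = H by apply: adjmx_herm.
exists (Y *m adjmx X *m invmx H); split.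
  rewrite !adjmxM adjmx_inv adjH adjmxK.
  transitivity (invmx H *m (X *m (adjmx Y *m Y) *m adjmx X) *m invmx H).
    by rewrite !mulmxA.
  rewrite -XX_YY; transitivity (invmx H *m H *m (H *m invmx H)).
    by rewrite /H !mulmxA.
  by rewrite mulVmx // mul1mx mulmxV.
set P := adjmx X *m invmx H *m X.
have XP0 : X *m (1%:M - P) = 0.
  by rewrite mulmxBr mulmx1 /P !mulmxA -/H mulmxV // mul1mx subrr.
have YP0 : Y *m (1%:M - P) = 0.
  apply: mul_adjmx_eq0.
  by rewrite adjmxM -mulmxA (mulmxA (adjmx Y)) -XX_YY -mulmxA XP0 !mulmx0.
apply/esym/eqP; rewrite -subr_eq0; apply/eqP.
by rewrite -YP0 mulmxBr mulmx1 /P !mulmxA.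
Qed.

(* Q^* and the isometry Q' taking Y to X agree on the full-row-rank Y. *)
Lemma unitary_of_gram_eq m p n (X : 'M[F]_(m, n)) (Y : 'M[F]_(p, n)) :
  row_free X -> row_free Y -> adjmx X *m X = adjmx Y *m Y ->
  exists Q : 'M[F]_(p, m),
    [/\ Q *m adjmx Q = 1%:M, adjmx Q *m Q = 1%:M & Q *m X = Y].
Proof.
move=> freeX freeY XX_YY.
have [Q [QQ1 QXY]] := isometry_of_gram_eq freeX XX_YY.
have [Q' [Q'Q'1 Q'YX]] := isometry_of_gram_eq freeY (esym XX_YY).
have adjQ : adjmx Q = Q'.
  by apply: (row_free_inj freeY); rewrite Q'YX -QXY mulmxA QQ1 mul1mx.
by exists Q; split => //; rewrite -[Q in Q *m _]adjmxK adjQ.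
Qed.

End Adjoint.

Lemma BC_gram (F : numClosedFieldType) n (C : 'M[F]_n)
    (B : 'M[F]_(\rank (defect C), n)) :
  is_BC B -> adjmx B *m B = defect C.
Proof.
case=> V [S] [VV1 imV [adjS _] SS ->].
have DS : ((defect C)^T <= S^T)%MS by rewrite -SS trmx_mul submxMl.
have SD : (S^T <= (defect C)^T)%MS.
  by rewrite -(mxrank_leqif_sup DS).2 !mxrank_tr -SS -{1}adjS mxrank_mul_adjmx.
have [M SM] : exists M, S = V *m M.
  exists (S^T *m pinvmx V^T)^T; apply: trmx_inj.
  by rewrite trmx_mul trmxK mulmxKpV // (eqmxP imV).
have -> : adjmx V *m S = M by rewrite SM mulmxA VV1 mul1mx.
apply: etrans SS; rewrite -{1}adjS SM adjmxM -mulmxA (mulmxA (adjmx V)).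
by rewrite VV1 mul1mx.
Qed.

Lemma row_free_gram_defect (F : numClosedFieldType) n (C : 'M[F]_n)
    (B : 'M[F]_(\rank (defect C), n)) :
  adjmx B *m B = defect C -> row_free B.
Proof. by move=> BB; rewrite /row_free -mxrank_mul_adjmx BB. Qed.

Lemma defect_unitary_conj (F : numClosedFieldType) n (C U : 'M[F]_n) :
  adjmx U *m U = 1%:M ->
  defect (adjmx U *m C *m U) = adjmx U *m defect C *m U.
Proof.
move=> UU1; have UU1' := mulmx1C UU1.
rewrite /defect !adjmxM adjmxK mulmxBr mulmxBl mulmx1 UU1.
by congr (_ - _); rewrite !mulmxA -(mulmxA _ U) UU1' mulmx1.
Qed.

Lemma unit_sim_of_assoc_pi (F : numClosedFieldType) n (C C' : 'M[F]_n)
    (B : 'M[F]_(\rank (defect C), n)) (B' : 'M[F]_(\rank (defect C'), n)) :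
  adjmx B *m B = defect C ->
  unit_sim (assoc_pi B) (assoc_pi B') -> unit_sim C C'.
Proof.
move=> BB [U [UU1 _ UAU]].
have AU_UA : assoc_pi B *m U = U *m assoc_pi B'.
  by rewrite -UAU !mulmxA UU1 mul1mx.
move: UU1 AU_UA; rewrite /assoc_pi -(submxK U) adjmx_block !mulmx_block.
rewrite !mul0mx ?mulmx0 ?add0r ?addr0 (scalar_mx_block _ n) => UU1 AU_UA.
have [_ _ _ dd1] := eq_block_mx UU1.
have [Bc0 _ Cc0 Cd] := eq_block_mx AU_UA.
set c := dlsubmx U in Bc0 Cc0 dd1 Cd; set d := drsubmx U in dd1 Cd.
have c0 : c = 0.
  have : (adjmx B *m B + adjmx C *m C) *m c = 0.
    by rewrite mulmxDl -!mulmxA Bc0 Cc0 !mulmx0 addr0.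
  by rewrite BB /defect subrK mul1mx.
rewrite c0 mul0mx add0r in dd1; rewrite c0 mul0mx add0r in Cd.
exists d; split => //; first exact: mulmx1C.
by rewrite -mulmxA Cd mulmxA (mulmx1C dd1) mul1mx.
Qed.

Lemma unit_sim_assoc_pi (F : numClosedFieldType) n (C C' : 'M[F]_n)
    (B : 'M[F]_(\rank (defect C), n)) (B' : 'M[F]_(\rank (defect C'), n)) :
  adjmx B *m B = defect C -> adjmx B' *m B' = defect C' ->
  unit_sim C C' -> unit_sim (assoc_pi B) (assoc_pi B').
Proof.
move=> BB BB' [U [UU1 UU1' UCU]].
have gramBU : adjmx (B *m U) *m (B *m U) = adjmx B' *m B'.
  transitivity (adjmx U *m (adjmx B *m B) *m U); first by rewrite adjmxM !mulmxA.
  by rewrite BB -defect_unitary_conj // UCU.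
have freeBU : row_free (B *m U).
  have [unitU _] := mulmx1_unit UU1.
  by rewrite /row_free mxrankMfree ?row_free_unit //; apply: row_free_gram_defect.
have [Q [QQ1 QQ1' QBU]] := unitary_of_gram_eq freeBU (row_free_gram_defect BB') gramBU.
exists (block_mx (adjmx Q) 0 0 U).
rewrite adjmx_block adjmxK !adjmx0 /assoc_pi !mulmx_block.
rewrite !mul0mx ?mulmx0 ?add0r ?addr0 !(scalar_mx_block _ n).
by rewrite QQ1 QQ1' UU1 UU1' !mul0mx -(mulmxA Q) QBU UCU.
Qed.

Theorem mainTheorem1 (R : realType) (n : nat) (C C' : 'M[R[i]]_n)
    (B : 'M[R[i]]_(\rank (defect C), n)) (B' : 'M[R[i]]_(\rank (defect C'), n)) :
  contraction C -> contraction C' -> is_BC B -> is_BC B' ->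
  (unit_sim (assoc_pi B) (assoc_pi B') <-> unit_sim C C').
Proof.
(* Contractivity is already implied by [is_BC]: D_C = S^2 with S psd. *)
move=> _ _ /BC_gram BB /BC_gram BB'; split.
  exact: unit_sim_of_assoc_pi BB.
exact: unit_sim_assoc_pi BB BB'.
Qed.
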